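(* For $d\ge2$, the permutation $\pi=(d,d-1,\dots,2,1)$ on $\mathcal{A}=\{a_1,\dots,a_d\}$ given by $\pi_0(a_i)=i$, $\pi_1(a_i)=d+1-i$, is transposition Lagrangian: the vectors $\mathbf{v}_{\mathcal{B}}$, $\mathcal{B}$ ranging over the orbits of size two of $\pi_{\mathcal{A}}$, span a subspace of dimension equal to the number of such orbits, and this number equals $g(\pi)$.
   Context: For $\pi=(\pi_0,\pi_1)$, define $\Omega=\Omega_\pi$ by $\Omega_{\alpha,\beta}=1$ if $\pi_0(\alpha)<\pi_0(\beta)$ and $\pi_1(\alpha)>\pi_1(\beta)$, $-1$ if $\pi_0(\alpha)>\pi_0(\beta)$ and $\pi_1(\alpha)<\pi_1(\beta)$, $0$ otherwise; $g(\pi)=\tfrac12\mathrm{rank}(\Omega_\pi)$ (the genus). Let $\pi_{\mathcal{A}}=\pi_0^{-1}\circ\pi_1:\mathcal{A}\to\mathcal{A}$, $\mathbf{e}_{\mathcal{B}}=\sum_{\alpha\in\mathcal{B}}\mathbf{e}_\alpha$ and $\mathbf{v}_{\mathcal{B}}=\Omega\mathbf{e}_{\mathcal{B}}$. A self-inverse $\pi$ is transposition Lagrangian if $\dim\mathrm{span}\{\mathbf{v}_{\mathcal{B}}:\#\mathcal{B}=2\}=\#\{\text{orbits }\mathcal{B}\text{ with }\#\mathcal{B}=2\}=g(\pi)$. *)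

From HB Require Import structures.
From mathcomp Require Import all_boot all_order all_algebra all_fingroup.
Set Implicit Arguments. Unset Strict Implicit. Unset Printing Implicit Defensive.
Import Order.TTheory GRing.Theory Num.Theory.
Local Open Scope ring_scope.

(* Alphabet A = 'I_d ; a permutation pi = (pi0, pi1) of 'I_d (positions 0..d-1). *)

Definition Omega (d : nat) (pi0 pi1 : {perm 'I_d}) : 'M[rat]_d :=
  \matrix_(a, b)
    (if (pi0 a < pi0 b)%N && (pi1 a > pi1 b)%N then 1
     else if (pi0 a > pi0 b)%N && (pi1 a < pi1 b)%N then -1 else 0).

Definition genus (d : nat) (pi0 pi1 : {perm 'I_d}) : nat :=
  (\rank (Omega pi0 pi1))./2.

(* pi_A = pi0^{-1} o pi1 ; in mathcomp (s * t) x = t (s x) *)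
Definition piA (d : nat) (pi0 pi1 : {perm 'I_d}) : {perm 'I_d} :=
  (pi1 * pi0^-1)%g.

Definition eB (d : nat) (B : {set 'I_d}) : 'cV[rat]_d :=
  \col_i (i \in B)%:R.

Definition vB (d : nat) (pi0 pi1 : {perm 'I_d}) (B : {set 'I_d}) : 'cV[rat]_d :=
  Omega pi0 pi1 *m eB B.

Definition orbits2 (d : nat) (pi0 pi1 : {perm 'I_d}) : {set {set 'I_d}} :=
  [set B in porbits (piA pi0 pi1) | #|B| == 2%N].

Definition span_dim (d : nat) (pi0 pi1 : {perm 'I_d}) : nat :=
  \rank (\sum_(B in orbits2 pi0 pi1) <<(vB pi0 pi1 B)^T>>)%MS.

Definition self_inverse (d : nat) (pi0 pi1 : {perm 'I_d}) : Prop :=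
  (piA pi0 pi1 * piA pi0 pi1 = 1)%g.

Definition transposition_Lagrangian (d : nat) (pi0 pi1 : {perm 'I_d}) : Prop :=
  self_inverse pi0 pi1 /\
  span_dim pi0 pi1 = #|orbits2 pi0 pi1| /\
  #|orbits2 pi0 pi1| = genus pi0 pi1.

(* The permutation (d, d-1, ..., 1): pi0(a_i) = i, pi1(a_i) = d+1-i,
   shifted to 0-based positions: pi0 = id, pi1 = rev_ord. *)
Definition rev_pi0 (d : nat) : {perm 'I_d} := 1%g.
Definition rev_pi1 (d : nat) : {perm 'I_d} := perm (@rev_ord_inj d).

From Pilot Require Import Defs.
From HB Require Import structures.
From mathcomp Require Import all_boot all_order all_algebra all_fingroup.
From mathcomp Require Import zify.
Set Implicit Arguments. Unset Strict Implicit. Unset Printing Implicit Defensive.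
Import Order.TTheory GRing.Theory Num.Theory.
Local Open Scope ring_scope.

(* For the reversal, [Omega a b] is the sign of [b - a] and [pi_A] is the
   involution [i |-> d-1-i], whose 2-orbits are the pairs [{i, d-1-i}] with
   [i < d/2].  Differences of consecutive rows of [Omega] are [e_k + e_(k+1)],
   so [rank Omega >= d - 1]; when [d] is even, an alternating sum of these
   combined with [row 0 + row (d-1) = e_(d-1) - e_0] yields [e_0], so [Omega]
   is invertible.  Hence [g = d/2].  Finally the [d/2] vectors [v_B] are
   independent: [v_{i, d-1-i}] has coordinate [1] at [i] and [0] at every
   [i < k < d/2]. *)

Lemma mxrank_geq_trig (F : fieldType) n p (A : 'M[F]_(n, p)) (f : 'I_n -> 'I_p) :
  (forall i j : 'I_n, (i < j)%N -> A i (f j) = 0) ->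
  (forall i, A i (f i) != 0) -> (n <= \rank A)%N.
Proof.
move=> A_trig A_diag.
have trig_Af : is_trig_mx (colsub f A).
  by apply/is_trig_mxP => i j lt_ij; rewrite mxE A_trig.
have unit_Af : colsub f A \in unitmx.
  by rewrite unitmxE det_trig // unitfE; apply/prodf_neq0 => i _; rewrite mxE.
apply: (@leq_trans (\rank (colsub f A))); first by rewrite mxrank_unit.
by rewrite -[A in colsub _ A]mulmx1 -mulmx_colsub mxrankM_maxl.
Qed.

Lemma subr_submx (F : fieldType) m1 m2 n (A B : 'M[F]_(m1, n)) (C : 'M_(m2, n)) :
  (A <= C)%MS -> (B <= C)%MS -> (A - B <= C)%MS.
Proof. by move=> sAC sBC; rewrite addmx_sub // -scaleN1r scalemx_sub. Qed.

Lemma porbit_involution (T : finType) (s : {perm T}) x :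
  s (s x) = x -> porbit s x = [set x; s x].
Proof.
move=> ssx; apply/setP => y; rewrite !inE; apply/porbitP/idP.
  case=> i ->; rewrite permX; elim: i => [|i IH] /=; first by rewrite eqxx.
  by case/orP: IH => /eqP ->; rewrite ?ssx eqxx ?orbT.
by case/orP=> /eqP ->; [exists 0%N; rewrite expg0 perm1 | exists 1%N; rewrite expg1].
Qed.

Lemma vB_set2 d (pi0 pi1 : {perm 'I_d}) (a b : 'I_d) : a != b ->
  vB pi0 pi1 [set a; b] = col a (Omega pi0 pi1) + col b (Omega pi0 pi1).
Proof.
move=> neq_ab; rewrite /vB !colE -mulmxDr; congr mulmx.
apply/colP => k; rewrite !mxE !inE eqxx !andbT.
by case: (eqVneq k a) => [->|_]; rewrite ?(negbTE neq_ab) ?addr0 ?add0r.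
Qed.

Lemma span_dim_leq_card d (pi0 pi1 : {perm 'I_d}) :
  (span_dim pi0 pi1 <= #|orbits2 pi0 pi1|)%N.
Proof.
rewrite /span_dim -sum1_card; apply: leq_trans (mxrank_sum_leqif _) _.
by apply: leq_sum => B _; rewrite /= mxrank_gen rank_leq_row.
Qed.

Section Reversal.
Variable d : nat.
Local Notation Om := (Omega (rev_pi0 d) (rev_pi1 d)).

Lemma Omega_revE (a b : 'I_d) :
  Om a b = if (a < b)%N then 1 else if (b < a)%N then -1 else 0.
Proof.
have lt_rev (x y : 'I_d) : (x < y)%N -> (d - y.+1 < d - x.+1)%N.
  by move=> ?; have := ltn_ord y; lia.
by rewrite mxE !permE /=; case: (ltngtP a b) => [/lt_rev|/lt_rev|] ->.
Qed.

Lemma row_Omega_rev (a : 'I_d) :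
  row a Om = \row_b (if (a < b)%N then 1 else if (b < a)%N then -1 else 0).
Proof. by apply/rowP => b; rewrite [LHS]mxE [RHS]mxE Omega_revE. Qed.

(* Indexed by [nat] to allow induction on [k]; indices [>= d] give [0]. *)
Definition erow (k : nat) : 'rV[rat]_d := \row_(j < d) (j == k :> nat)%:R.

Lemma erowD_sub k : (k.+1 < d)%N -> ((erow k + erow k.+1)%R <= Om)%MS.
Proof.
move=> lt_k1d; have lt_kd : (k < d)%N by lia.
have -> : erow k + erow k.+1 = row (Ordinal lt_kd) Om - row (Ordinal lt_k1d) Om.
  apply/rowP => j; rewrite !row_Omega_rev !mxE /=.
  by case: (ltngtP k j) => ?; case: (ltngtP k.+1 j) => ? //=; lia.
by rewrite subr_submx ?row_sub.
Qed.

Lemma erow_ends_sub : (0 < d)%N -> ((erow d.-1 - erow 0)%R <= Om)%MS.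
Proof.
move=> d_gt0; have lt_d1d : (d.-1 < d)%N by lia.
have -> : erow d.-1 - erow 0 = row (Ordinal d_gt0) Om + row (Ordinal lt_d1d) Om.
  apply/rowP => j; rewrite !row_Omega_rev !mxE /=; have := ltn_ord j.
  by case: (ltngtP 0 j) => ?; case: (ltngtP d.-1 j) => ? //=; lia.
by rewrite addmx_sub ?row_sub.
Qed.

Lemma erow0_alt_sub k : (k.+1 < d)%N ->
  ((erow 0 + (-1) ^+ k *: erow k.+1)%R <= Om)%MS.
Proof.
elim: k => [|k IH] lt_kd; first by rewrite scale1r erowD_sub.
have -> : erow 0 + (-1) ^+ k.+1 *: erow k.+2
    = erow 0 + (-1) ^+ k *: erow k.+1 - (-1) ^+ k *: (erow k.+1 + erow k.+2).
  by rewrite exprS mulN1r scaleNr scalerDr opprD addrA addrK.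
by rewrite subr_submx ?scalemx_sub ?erowD_sub ?IH //; lia.
Qed.

Lemma erow_sub_even k : ~~ odd d -> (k < d)%N -> (erow k <= Om)%MS.
Proof.
move=> even_d; elim: k => [|k IH] lt_kd.
  have [n def_d] : exists n, d = n.+2.
    by exists d.-2; have := odd_double_half d; move: even_d lt_kd; case: odd => //=; lia.
  have sign_n : (-1) ^+ n = 1 :> rat.
    by rewrite -signr_odd; move: even_d; rewrite def_d /= negbK => /negbTE ->.
  have -> : erow 0 = 2^-1 *: ((erow 0 + (-1) ^+ n *: erow n.+1) - (erow d.-1 - erow 0)).
    have -> : d.-1 = n.+1 by rewrite def_d.
    rewrite sign_n scale1r opprB addrACA subrr addr0 -mulr2n -scaler_nat.
    by rewrite scalerA mulVf ?scale1r.
  apply/scalemx_sub/subr_submx; first by apply: erow0_alt_sub; rewrite def_d.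
  exact: erow_ends_sub.
have -> : erow k.+1 = (erow k + erow k.+1) - erow k by rewrite addrC addKr.
by rewrite subr_submx ?erowD_sub ?IH //; lia.
Qed.

Lemma Omega_rev_row_full : ~~ odd d -> row_full Om.
Proof.
move=> even_d; rewrite -sub1mx; apply/row_subP => i.
have -> : row i 1%:M = erow i by apply/rowP => j; rewrite !mxE eq_sym.
exact: erow_sub_even.
Qed.

Lemma Omega_rev_rank_geq : (d.-1 <= \rank Om)%N.
Proof.
have lt_i1d (i : 'I_d.-1) : (i.+1 < d)%N by have := ltn_ord i; lia.
pose W := \matrix_(i < d.-1) (erow i + erow i.+1).
have sWOm : (W <= Om)%MS.
  by apply/row_subP => i; rewrite rowK erowD_sub.
apply: leq_trans (mxrankS sWOm).
apply: (mxrank_geq_trig (f := fun i => Ordinal (lt_i1d i))) => [i j lt_ij|i].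
  by rewrite !mxE /=; case: eqP; case: eqP => //; lia.
by rewrite !mxE /= eqxx gtn_eqF // addr0 oner_neq0.
Qed.

Lemma genus_rev : genus (rev_pi0 d) (rev_pi1 d) = d./2.
Proof.
rewrite /genus; case: (boolP (odd d)) => [odd_d|even_d]; last first.
  by rewrite (eqP (Omega_rev_row_full even_d)).
have := Omega_rev_rank_geq; have := rank_leq_row Om.
have := odd_double_half d; rewrite odd_d; lia.
Qed.

Lemma piA_rev : piA (rev_pi0 d) (rev_pi1 d) = rev_pi1 d.
Proof. by rewrite /piA /rev_pi0 invg1 mulg1. Qed.

Lemma rev_pi1E (i : 'I_d) : rev_pi1 d i = rev_ord i.
Proof. by rewrite permE. Qed.

Lemma self_inverse_rev : Defs.self_inverse (rev_pi0 d) (rev_pi1 d).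
Proof.
rewrite /Defs.self_inverse piA_rev; apply/permP => i.
by rewrite permM !rev_pi1E rev_ordK perm1.
Qed.

Lemma porbit_rev (i : 'I_d) : porbit (rev_pi1 d) i = [set i; rev_ord i].
Proof. by rewrite porbit_involution !rev_pi1E ?rev_ordK. Qed.

Lemma half_leq_d : (d./2 <= d)%N. Proof. lia. Qed.

Definition rev_pair (i : 'I_d./2) : {set 'I_d} :=
  [set widen_ord half_leq_d i; rev_ord (widen_ord half_leq_d i)].

Lemma rev_pair_neq (i : 'I_d./2) :
  widen_ord half_leq_d i != rev_ord (widen_ord half_leq_d i).
Proof. by apply/eqP => /(congr1 val) /=; have := ltn_ord i; lia. Qed.

Lemma rev_pair_orbits2 (i : 'I_d./2) :
  rev_pair i \in orbits2 (rev_pi0 d) (rev_pi1 d).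
Proof.
rewrite inE cards2 rev_pair_neq andbT piA_rev.
by apply/imsetP; exists (widen_ord half_leq_d i); rewrite ?porbit_rev.
Qed.

Lemma card_orbits2_rev_leq : (#|orbits2 (rev_pi0 d) (rev_pi1 d)| <= d./2)%N.
Proof.
suff sub_pairs : orbits2 (rev_pi0 d) (rev_pi1 d) \subset rev_pair @: 'I_d./2.
  apply: leq_trans (subset_leq_card sub_pairs) _.
  by apply: leq_trans (leq_imset_card _ _) _; rewrite card_ord.
apply/subsetP => B; rewrite inE piA_rev => /andP [/imsetP [x _ ->]].
rewrite porbit_rev cards2 eqSS eqb1 => neq_x; apply/imsetP.
have [lt_xm|ge_xm] := ltnP x d./2.
  exists (Ordinal lt_xm) => //.
  by rewrite /rev_pair (_ : widen_ord _ _ = x) //; apply: val_inj.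
have lt_rxm : (rev_ord x < d./2)%N.
  have neq_val : (x : nat) <> (d - x.+1)%N.
    by move=> E; move/eqP: neq_x; apply; apply: val_inj.
  by have := ltn_ord x; rewrite /=; lia.
exists (Ordinal lt_rxm) => //.
by rewrite /rev_pair (_ : widen_ord _ _ = rev_ord x) ?rev_ordK 1?setUC //; apply: val_inj.
Qed.

Lemma span_dim_rev_geq : (d./2 <= span_dim (rev_pi0 d) (rev_pi1 d))%N.
Proof.
pose V := \matrix_(i < d./2) (vB (rev_pi0 d) (rev_pi1 d) (rev_pair i))^T.
have sV : (V <= \sum_(B in orbits2 (rev_pi0 d) (rev_pi1 d))
                  <<(vB (rev_pi0 d) (rev_pi1 d) B)^T>>)%MS.
  apply/row_subP => i; apply: (sumsmx_sup (rev_pair i)); rewrite ?rev_pair_orbits2 //.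
  by rewrite rowK genmxE.
have VE i (k : 'I_d) :
    V i k = Om k (widen_ord half_leq_d i) + Om k (rev_ord (widen_ord half_leq_d i)).
  by rewrite [LHS]mxE vB_set2 ?rev_pair_neq // !mxE.
apply: leq_trans (mxrankS sV).
have lt_rev (i j : 'I_d./2) : (i <= j)%N -> (j < d - i.+1)%N.
  by have := ltn_ord j; lia.
apply: (mxrank_geq_trig (f := widen_ord half_leq_d)) => [i j lt_ij|i];
  rewrite VE !Omega_revE /=.
  have -> : (j < i)%N = false by rewrite ltnNge ltnW.
  by rewrite lt_ij (lt_rev i j (ltnW lt_ij)) addNr.
by rewrite ltnn (lt_rev i i (leqnn i)) add0r oner_neq0.
Qed.

End Reversal.

Theorem mainTheorem10 (d : nat) (hd : (2 <= d)%N) :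
  transposition_Lagrangian (rev_pi0 d) (rev_pi1 d).
Proof.
split; first exact: self_inverse_rev.
have := span_dim_leq_card (rev_pi0 d) (rev_pi1 d).
have := span_dim_rev_geq d; have := card_orbits2_rev_leq d.
rewrite genus_rev; lia.
Qed.
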